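(* For every prime $q$, let $S_q=\{d+q\mathbb{Z}: d\in\mathbb{Z}_{>0},\ d\mid\prod_{p<q}p\}\subseteq(\mathbb{Z}/q\mathbb{Z})^\times$, where the product is over primes $p<q$. Then $\#S_q>\frac12(q-1)$.
   Context: $S_q$ is the set of residue classes modulo $q$ attained by the squarefree positive integers all of whose prime factors are less than $q$. *)

From mathcomp Require Import all_boot.
Set Implicit Arguments. Unset Strict Implicit. Unset Printing Implicit Defensive.

Definition primorial_below (q : nat) : nat := \prod_(p < q | prime p) p.

(* S_q : the set of residues d mod q of positive divisors d of the product of
   primes below q, represented as a duplicate-free list of naturals in [0, q). *)
Definition Sq (q : nat) : seq nat :=
  undup [seq d %% q | d <- divisors (primorial_below q)].

(* A residue class in [1, q) is hit by S_q as soon as its least positive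
   representative x is squarefree, since then x divides the product of the
   primes below q.  A non-squarefree x <= n := q - 1 is divisible by 4, by 9
   or by the square of an odd number >= 5, so there are at most
   n/4 + n/9 + n * sum_(i >= 0) 1/(2i+5)^2 <= n/4 + n/9 + n/8 = 35n/72 of them,
   fewer than n/2. *)

From mathcomp Require Import all_boot all_order all_algebra.
From mathcomp Require Import ring lra zify.
Import Order.TTheory GRing.Theory Num.Theory.

Set Implicit Arguments.
Unset Strict Implicit.
Unset Printing Implicit Defensive.

Section OddSquares.
Local Open Scope ring_scope.

(* Telescoping: 1/(2i+5)^2 <= 1/((i+2)(4i+12)) = 1/(4i+8) - 1/(4i+12). *)
Lemma sum_inv_odd_sq_le (R : realFieldType) (k : nat) :
  \sum_(0 <= i < k) (((2 * i + 5) * (2 * i + 5))%N%:R : R)^-1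
    + ((4 * k + 8)%N%:R)^-1 <= 8^-1.
Proof.
elim: k => [|k IH]; first by rewrite big_geq // add0r.
apply: le_trans IH; rewrite big_nat_recr //= -addrA lerD2l.
have telescope : ((4 * k + 8)%N%:R : R)^-1 - ((4 * k.+1 + 8)%N%:R)^-1
                 = ((k + 2) * (4 * k + 12))%N%:R^-1.
  rewrite !natrM !natrD !natrM -natr1; field.
  have k_ge0 : 0 <= k%:R :> R by apply: ler0n.
  by apply/and3P; split; rewrite gt_eqF //; lra.
by rewrite -lerBrDr telescope lef_pV2 ?posrE ?ltr0n ?ler_nat; lia.
Qed.

Lemma sum_div_odd_sq_le (n k : nat) :
  (8 * \sum_(0 <= i < k) n %/ ((2 * i + 5) * (2 * i + 5)) <= n)%N.
Proof.
rewrite -(ler_nat rat) natrM natr_sum.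
set S := \sum_(0 <= i < k) _.
have S_le : S <= n%:R * \sum_(0 <= i < k) (((2 * i + 5) * (2 * i + 5))%N%:R : rat)^-1.
  rewrite mulr_sumr; apply: ler_sum => i _.
  by rewrite ler_pdivlMr ?ltr0n -?natrM ?ler_nat ?leq_divM //; lia.
have := sum_inv_odd_sq_le rat k.
have : 0 <= ((4 * k + 8)%N%:R : rat)^-1 by rewrite invr_ge0 ler0n.
have : 0 <= n%:R :> rat by apply: ler0n.
move: S_le; nra.
Qed.

End OddSquares.

Lemma prime_dvd_primorial_below (q p : nat) :
  prime p -> p < q -> p %| primorial_below q.
Proof.
move=> p_pr p_lt_q; rewrite /primorial_below (bigD1 (Ordinal p_lt_q)) //=.
exact: dvdn_mulr.
Qed.

Lemma primorial_below_gt0 (q : nat) : 0 < primorial_below q.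
Proof. by apply: prodn_cond_gt0 => p; apply: prime_gt0. Qed.

Lemma not_dvd_primorial_below (q x : nat) :
  0 < x < q -> ~~ (x %| primorial_below q) -> has (fun p => p * p %| x) (primes x).
Proof.
case/andP=> x_gt0 x_lt_q; apply: contraR => /hasPn no_sq.
apply/dvdn_partP => // p; rewrite mem_primes => /and3P[p_pr _ p_dvd_x].
have logn_le1 : logn p x <= 1.
  by rewrite leqNgt -pfactor_dvdn // no_sq // mem_primes p_pr x_gt0.
rewrite p_part (dvdn_trans (dvdn_exp2l p logn_le1)) //.
by apply: prime_dvd_primorial_below => //; apply: leq_ltn_trans (dvdn_leq _ _) x_lt_q.
Qed.

Definition sq_cover (n : nat) : seq nat :=
  [seq d * d | d <- [:: 2, 3 & [seq 2 * i + 5 | i <- iota 0 n]]].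

Lemma prime_sq_in_sq_cover (n p : nat) :
  prime p -> p <= n -> p * p \in sq_cover n.
Proof.
move=> p_pr p_le_n; rewrite /sq_cover (map_f (fun d => d * d)) // !inE.
have [->|p_odd] := even_prime p_pr; first by [].
have [->|p_neq3] := eqVneq p 3; first by rewrite orbT.
apply/orP; right; apply/orP; right; apply/mapP; exists ((p - 5) %/ 2).
  by rewrite mem_iota; lia.
have p_gt1 := prime_gt1 p_pr; have := modn2 p; rewrite p_odd; lia.
Qed.

Lemma not_dvd_primorial_below_le_sum (n x : nat) :
  0 < x <= n -> ~~ (x %| primorial_below n.+1) <= \sum_(d <- sq_cover n) (d %| x).
Proof.
move=> x_range; case: (boolP (x %| _)) => //= x_ndvd.
have x_lt : 0 < x < n.+1 by lia.
have /hasP[p] := not_dvd_primorial_below x_lt x_ndvd.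
rewrite mem_primes => /and3P[p_pr _ _] sq_dvd.
rewrite lt0n sum_nat_seq_neq0; apply/hasP; exists (p * p) => /=; last by rewrite sq_dvd.
apply: prime_sq_in_sq_cover => //.
have := dvdn_leq (_ : 0 < x) sq_dvd; have := prime_gt1 p_pr; nia.
Qed.

Lemma sum_not_dvd_primorial_below_le (n : nat) :
  \sum_(1 <= x < n.+1) ~~ (x %| primorial_below n.+1)
    <= \sum_(d <- sq_cover n) n %/ d.
Proof.
under [X in _ <= X]eq_bigr => d _ do rewrite divn_count_dvd.
rewrite exchange_big /= big_seq [X in _ <= X]big_seq; apply: leq_sum => x.
by rewrite mem_index_iota => x_range; apply: not_dvd_primorial_below_le_sum; lia.
Qed.

Lemma sum_div_sq_cover_lt (n : nat) : 0 < n -> 2 * \sum_(d <- sq_cover n) n %/ d < n.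
Proof.
move=> n_gt0; rewrite /sq_cover map_cons !big_cons !big_map /=.
have := sum_div_odd_sq_le n n; rewrite /index_iota subn0.
have := leq_divM n 4; have := leq_divM n 9; lia.
Qed.

Lemma sum_dvd_primorial_below_le_size_Sq (q : nat) :
  \sum_(1 <= x < q) (x %| primorial_below q) <= size (Sq q).
Proof.
have -> : \sum_(1 <= x < q) (x %| primorial_below q)
          = count (dvdn^~ (primorial_below q)) (index_iota 1 q).
  by rewrite -sum1_count [RHS]big_mkcond.
rewrite -size_filter; apply: uniq_leq_size; first exact/filter_uniq/iota_uniq.
move=> x; rewrite mem_filter mem_index_iota => /andP[x_dvd x_range].
rewrite mem_undup; apply/mapP; exists x; last by rewrite modn_small; lia.
by rewrite -dvdn_divisors // primorial_below_gt0.
Qed.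

Theorem lemma1 (q : nat) (hq : prime q) : q - 1 < 2 * size (Sq q).
Proof.
case: q hq => [//|n] hq; rewrite subn1 /=.
have n_gt0 : 0 < n by rewrite -ltnS prime_gt1.
have split_range : \sum_(1 <= x < n.+1) (x %| primorial_below n.+1)
                   + \sum_(1 <= x < n.+1) ~~ (x %| primorial_below n.+1) = n.
  rewrite -big_split /= (eq_bigr (fun=> 1)) => [|x _]; last by rewrite addnC addn_negb.
  by rewrite sum_nat_const_nat subn1 muln1.
have := sum_dvd_primorial_below_le_size_Sq n.+1.
have := sum_not_dvd_primorial_below_le n.
have := sum_div_sq_cover_lt n_gt0.
lia.
Qed.
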